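(* Let $p$ be a prime, $m\ge 1$ and $r$ integers with $r^p\equiv 1 \pmod m$, and let $G=\langle x, y\mid x^p=y^m=1,\ x^{-1}yx=y^r\rangle$ (so $G\cong C_p\ltimes C_m$ and $|G|=pm$). Assume that $p$ is the smallest prime divisor of $|G|$ and that $\gcd(p(r-1), m)=1$. Then $\mathsf d(G)=m+p-2$.
   Context: A sequence over a finite multiplicatively written group $G$ is a finite unordered list of elements of $G$ with repetition allowed; its length is the number of terms. For a sequence $S=g_1\cdot\ldots\cdot g_\ell$, $\pi(S)=\{g_{\tau(1)}\cdots g_{\tau(\ell)}:\tau \text{ a permutation of } [1,\ell]\}$. $S$ is product-one if $1\in\pi(S)$. The small Davenport constant $\mathsf d(G)$ is the maximal integer $\ell$ such that there is a sequence of length $\ell$ over $G$ having no nonempty product-one subsequence. *)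

From mathcomp Require Import all_boot all_order all_algebra all_fingroup.
Set Implicit Arguments. Unset Strict Implicit. Unset Printing Implicit Defensive.
Import GRing.Theory.

Local Open Scope group_scope.

Definition expgz (gT : finGroupType) (y : gT) (r : int) : gT :=
  match r with
  | Posz n => y ^+ n
  | Negz n => (y ^+ n.+1)^-1
  end.

(* Sequences over G are modelled by lists (seq gT) whose terms lie in G;
   all notions below are invariant under permutation, so this models
   unordered sequences (finite multisets). *)

Definition product_one (gT : finGroupType) (S : seq gT) : Prop :=
  exists s' : seq gT, perm_eq s' S /\ \prod_(g <- s') g = 1.

Definition product_one_free (gT : finGroupType) (G : {set gT}) (S : seq gT) : Prop :=
  all (fun g => g \in G) S /\
  forall T : seq gT, subseq T S -> T <> [::] -> ~ product_one T.

Definition is_small_davenport (gT : finGroupType) (G : {set gT}) (n : nat) : Prop :=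
  (exists S : seq gT, product_one_free G S /\ size S = n) /\
  (forall S : seq gT, product_one_free G S -> (size S <= n)%N).

From mathcomp Require Import all_boot all_order all_algebra all_fingroup.
From mathcomp Require Import cyclic maximal gseries zify ring boolp.
Set Implicit Arguments. Unset Strict Implicit. Unset Printing Implicit Defensive.

(* Write N = <[y]>, a normal cyclic subgroup of order m and index p.  Since
   r - 1 is prime to m, conjugation by x fixes no nontrivial element of N, and
   as N is a maximal subgroup, no element of G outside N centralises a
   nontrivial element of N.

   The sequence y^(m-1) x^(p-1) is product-one free: modulo N a product-one
   subsequence uses x a multiple of p times, hence not at all, and then it is a
   power y^k with 0 < k < m.

   Conversely, for a product-one free S let X(S) be the set of products (in any
   order) of sub-multisets of S that lie in N; we show |S| + 2 <= |X(S)| + p by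
   induction on |S|.  If no nonempty sub-multiset has its product in N, the
   |S| + 1 prefix products of S lie in distinct cosets of N, so |S| < p.
   Otherwise pick a shortest such W, with product v <> 1, and S = W + S'.  The
   conjugates of v by the |W| proper prefix products of W are the products of
   the rotations of W; by minimality and the centraliser property they are
   distinct and nontrivial.  Scherk's theorem in the abelian group N, applied to
   X(S') and 1 together with these conjugates, gives |X(S)| >= |X(S')| + |W|.
   Since |X(S)| <= m, every product-one free S has length at most m + p - 2. *)

Lemma injective_ord_lt (T : eqType) n (f : 'I_n -> T) :
  (forall i j : 'I_n, i < j -> f i != f j) -> injective f.
Proof.
move=> neq i j fij; apply: ord_inj.
by case: (ltngtP i j) => [/neq | /neq | //]; rewrite fij eqxx.
Qed.

Section SubMultiset.
Variable T : eqType.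
Implicit Types s t u w : seq T.

Definition submset t s := exists u, perm_eq s (t ++ u).

Lemma submset_nil s : submset [::] s.
Proof. by exists s. Qed.

Lemma submset_trans u t s : submset u t -> submset t s -> submset u s.
Proof.
move=> [t' put] [s' pts]; exists (t' ++ s').
by rewrite (perm_trans pts) // catA perm_cat2r.
Qed.

Lemma perm_submsetr t s s' : perm_eq s s' -> submset t s -> submset t s'.
Proof. by move=> pss' [u ps]; exists u; rewrite -(permPl pss'). Qed.

Lemma submset_cat t1 s1 t2 s2 :
  submset t1 s1 -> submset t2 s2 -> submset (t1 ++ t2) (s1 ++ s2).
Proof.
move=> [u1 p1] [u2 p2]; exists (u1 ++ u2).
by rewrite (perm_trans (perm_cat p1 p2)) // -!catA perm_cat2l perm_catCA.
Qed.

Lemma submset_catr s t : submset s (t ++ s).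
Proof. by exists t; rewrite perm_catC. Qed.

Lemma subseq_submset t s : subseq t s -> submset t s.
Proof. by case/perm_to_subseq=> u; exists u. Qed.

Lemma submset_block s i k : submset (take k (drop i s)) s.
Proof.
exists (take i s ++ drop k (drop i s)).
by rewrite -{1}(cat_take_drop i s) -{1}(cat_take_drop k (drop i s)) perm_catCA.
Qed.

Lemma mem_submset t s : submset t s -> {subset t <= s}.
Proof. by move=> [u ps] x xt; rewrite (perm_mem ps) mem_cat xt. Qed.

Lemma submset_subseq t s : submset t s -> exists2 t', subseq t' s & perm_eq t t'.
Proof.
move=> [u ps]; apply/count_subseqP => x.
by rewrite (seq.permP ps) count_cat leq_addr.
Qed.

Lemma ex_submset_minsize (P : seq T -> Prop) s :
  (exists2 w, submset w s & P w) ->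
  exists2 w, submset w s & P w /\ forall u, submset u w -> P u -> size w <= size u.
Proof.
move=> [w0 sw0s Pw0].
pose Q k := `[< exists2 w, submset w s & P w /\ size w = k >].
have [|k /asboolP[w sws [Pw <-]] minQ] := ex_minnP (ex_intro Q (size w0) _).
  by apply/asboolP; exists w0.
exists w => //; split=> // u suw Pu; apply: minQ; apply/asboolP.
by exists u; first exact: submset_trans suw sws.
Qed.

End SubMultiset.

Section SubProducts.
Local Open Scope group_scope.
Variable gT : finGroupType.
Implicit Types (G : {group gT}) (S T : seq gT).

Definition subprods S : {set gT} :=
  [set g | `[< exists2 T, submset T S & \prod_(x <- T) x = g >]].

Lemma subprodsP S g :
  reflect (exists2 T, submset T S & \prod_(x <- T) x = g) (g \in subprods S).
Proof. by rewrite inE; apply: asboolP. Qed.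

Lemma mem_subprods S T : submset T S -> \prod_(x <- T) x \in subprods S.
Proof. by move=> sTS; apply/subprodsP; exists T. Qed.

Lemma subprods1 S : 1 \in subprods S.
Proof. by apply/subprodsP; exists [::]; [exact: submset_nil | rewrite big_nil]. Qed.

Lemma subprodsS S' S : submset S' S -> subprods S' \subset subprods S.
Proof.
move=> sS'S; apply/subsetP => _ /subprodsP[T sTS' <-].
exact/mem_subprods/(submset_trans sTS').
Qed.

Lemma group_prod_seq G S : {subset S <= G} -> \prod_(x <- S) x \in G.
Proof. by move=> sSG; rewrite big_seq group_prod. Qed.

Lemma prod_rot S i :
  \prod_(x <- rot i S) x = (\prod_(x <- S) x) ^ \prod_(x <- take i S) x.
Proof.
by rewrite -{2}(cat_take_drop i S) /rot !big_cat /conjg mulgA mulKg.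
Qed.

Lemma prod_take_split S i j : (i <= j <= size S)%N ->
  exists2 B, submset B S /\ size B = (j - i)%N &
    \prod_(x <- take j S) x = \prod_(x <- take i S) x * \prod_(x <- B) x.
Proof.
case/andP=> leij lejS; exists (take (j - i) (drop i S)).
  by split; [exact: submset_block | rewrite size_takel // size_drop leq_sub2r].
by rewrite -{1}(subnKC leij) takeD big_cat.
Qed.

Lemma product_one_free_submset G S T :
  submset T S -> product_one_free G S -> product_one_free G T.
Proof.
move=> sTS [/allP sSG freeS]; split.
  by apply/allP => g /(mem_submset sTS)/sSG.
move=> U sUT nU /= [U' [pU'U prodU']].
have [V sVS pUV] := submset_subseq (submset_trans (subseq_submset sUT) sTS).
apply: (freeS V sVS).
  by apply: contra_not nU => V0; move: pUV; rewrite V0 => /perm_nilP.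
by exists U'; rewrite (perm_trans pU'U).
Qed.

Lemma product_one_free_prod G S :
  product_one_free G S -> S != [::] -> \prod_(x <- S) x != 1.
Proof.
move=> [_ freeS] nS; apply/eqP => prodS.
by apply: (freeS S (subseq_refl S)); [apply/eqP | exists S].
Qed.

Lemma prod_count_coset (N : {group gT}) (x : gT) S :
  x \in 'N(N) -> {subset S <= x |: N} ->
  x ^- count_mem x S * \prod_(g <- S) g \in N.
Proof.
move=> xN; elim: S => [|g S IHs] sN /=; first by rewrite big_nil expg0 invg1 mulg1 group1.
have /IHs {}IHs : {subset S <= x |: N} by move=> h hS; rewrite sN // in_cons hS orbT.
rewrite big_cons; case: (eqVneq g x) => [-> | neq_gx] /=.
  by rewrite add1n expgS invMg -mulgA mulKg.
have gN : g \in N by move: (sN g (mem_head g S)); rewrite !inE (negbTE neq_gx).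
by rewrite add0n mulgA (conjgCV _ g) invgK -mulgA groupM // memJ_norm // groupX.
Qed.

End SubProducts.

Section Scherk.
Local Open Scope group_scope.
Variables (gT : finGroupType) (H : {group gT}).
Hypothesis abH : abelian H.
Implicit Types A B : {set gT}.

Definition unique_one_rep A B := {in A & B, forall a b, a * b = 1 -> b = 1}.

Lemma mulg_stable_sub1 A B : 1 \in A -> unique_one_rep A B ->
  A * B \subset A -> B \subset [set 1].
Proof.
move=> A1 uqAB sABA; apply/subsetP => b Bb; rewrite inE; apply/eqP.
have sAbA : A :* b \subset A by rewrite (subset_trans _ sABA) ?mulgS ?sub1set.
have AbA : A :* b = A by apply/eqP; rewrite eqEcard sAbA card_rcoset leqnn.
have : 1 \in A :* b by rewrite AbA.
by rewrite mem_rcoset mul1g => Abi; apply: uqAB Abi Bb (mulVg b).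
Qed.

Section DysonTransform.
Variables (A B : {set gT}) (a : gT).
Hypotheses (sBH : B \subset H) (Aa : a \in A).

Local Notation dysonA := (A :|: a *: B).
Local Notation dysonB := [set b in B | a * b \in A].

Lemma card_dyson : #|dysonA| + #|dysonB| = #|A| + #|B|.
Proof.
rewrite -(card_lcoset B a) -(cardsUI A (a *: B)); congr (_ + _).
rewrite -(card_lcoset dysonB a); apply: eq_card => z.
by rewrite !inE !mem_lcoset inE mulKVg andbC.
Qed.

Let commH : {in H &, forall u v, commute u v}.
Proof. by move=> u v Hu Hv; apply: (centsP abH). Qed.

Lemma mulg_dyson_sub : dysonA * dysonB \subset A * B.
Proof.
apply/subsetP => _ /mulsgP[u b Au /setIdP[Bb abA] ->].
case/setUP: Au => [Au | /lcosetP[c Bc ->]]; first by rewrite mem_mulg.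
rewrite -mulgA (commH (subsetP sBH c Bc) (subsetP sBH b Bb)) mulgA.
by rewrite mem_mulg.
Qed.

Lemma unique_one_rep_dyson : unique_one_rep A B -> unique_one_rep dysonA dysonB.
Proof.
move=> uqAB u b Au /setIdP[Bb abA] ub1.
case/setUP: Au => [Au | /lcosetP[c Bc uE]]; first exact: uqAB ub1.
have abc1 : (a * b) * c = 1.
  by rewrite -mulgA -(commH (subsetP sBH c Bc) (subsetP sBH b Bb)) mulgA -uE.
have c1 : c = 1 := uqAB _ _ abA Bc abc1.
by rewrite c1 mulg1 in abc1; apply: uqAB abc1.
Qed.

End DysonTransform.

Theorem scherk A B : A \subset H -> B \subset H -> 1 \in A -> 1 \in B ->
  unique_one_rep A B -> #|A| + #|B| <= #|A * B| + 1.
Proof.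
move: {2}#|B| (leqnn #|B|) => n.
elim: n A B => [|n IHn] A B leBn sAH sBH A1 B1 uqAB.
  by move: leBn; rewrite leqn0 => /eqP/card0_eq/(_ 1); rewrite B1.
have [sABA | /subsetPn[_ /mulsgP[a b Aa Bb ->] abA]] := boolP (A * B \subset A).
  have /eqP-> : B == [set 1].
    by rewrite eqEsubset sub1set B1 andbT (mulg_stable_sub1 A1 uqAB).
  by rewrite rcoset1 cards1.
have sB'B : [set b in B | a * b \in A] \subset B by rewrite setIdE subsetIl.
have sA'H : A :|: a *: B \subset H.
  rewrite subUset sAH /=; apply/subsetP => _ /lcosetP[c Bc ->].
  by rewrite groupM ?(subsetP sAH a Aa) ?(subsetP sBH c Bc).
have leB'n : #|[set b in B | a * b \in A]| <= n.
  rewrite -ltnS (leq_trans _ leBn) // proper_card // properEneq sB'B andbT.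
  by apply: contraNneq abA => /setP/(_ b); rewrite !inE Bb /= => ->.
have A'1 : 1 \in A :|: a *: B by rewrite inE A1.
have B'1 : 1 \in [set b in B | a * b \in A] by rewrite inE B1 mulg1 Aa.
have uqAB' := unique_one_rep_dyson sBH Aa uqAB.
have := IHn _ _ leB'n sA'H (subset_trans sB'B sBH) A'1 B'1 uqAB'.
rewrite card_dyson => /leq_trans; apply.
by rewrite leq_add2r subset_leq_card // mulg_dyson_sub.
Qed.

End Scherk.

Section KernelSubproducts.
Local Open Scope group_scope.
Variables (gT : finGroupType) (G N : {group gT}).
Implicit Types S W : seq gT.

Lemma size_lt_indexg S : {subset S <= G} ->
  (forall W, submset W S -> W != [::] -> \prod_(x <- W) x \notin N) ->
  (size S < #|G : N|)%N.
Proof.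
move=> sSG noN; pose P i := \prod_(x <- take i S) x.
have PG i : P i \in G.
  by apply: group_prod_seq => x /mem_take/sSG.
pose f (i : 'I_(size S).+1) := P i *: N.
have injf : injective f.
  apply: injective_ord_lt => i j ltij.
  have /prod_take_split[B [sBS szB] PjE] : (i <= j <= size S)%N.
    by rewrite (ltnW ltij) -ltnS ltn_ord.
  apply: contra (noN B sBS _) => [/eqP fij|]; last first.
    by rewrite -size_eq0 szB subn_eq0 -ltnNge.
  by rewrite -(mulKg (P i) (\prod_(x <- B) x)) -PjE -mem_lcoset -/(f i) fij lcoset_refl.
rewrite -[(size S).+1]card_ord -(card_imset predT injf) -card_lcosets.
apply: subset_leq_card; apply/subsetP => _ /imsetP[i _ ->].
by rewrite mem_lcosets -(mulg1 (P i)) mem_mulg.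
Qed.

Hypotheses (nsNG : N <| G) (abN : abelian N).
Hypothesis cent_N : {in N^#, forall v, 'C_G[v] \subset N}.

Section MinimalBlock.
Variables S S' W : seq gT.
Hypotheses (freeS : product_one_free G S) (defS : perm_eq S (W ++ S')).
Hypotheses (nW : W != [::]) (WN : \prod_(x <- W) x \in N).
Hypothesis minW : forall U, submset U W -> U != [::] /\ \prod_(x <- U) x \in N ->
  (size W <= size U)%N.

Local Notation v := (\prod_(x <- W) x).
Local Notation P i := (\prod_(x <- take i W) x).

Let sWS : submset W S. Proof. by exists S'. Qed.

Let sWG : {subset W <= G}.
Proof. by case: (product_one_free_submset sWS freeS) => /allP. Qed.

Let W1 : v != 1.
Proof. exact: product_one_free_prod (product_one_free_submset sWS freeS) nW. Qed.

Let PG i : P i \in G.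
Proof. by apply: group_prod_seq => x /mem_take/sWG. Qed.

Lemma card_conj_prefix : #|[set v ^ P i | i : 'I_(size W)]| = size W.
Proof.
rewrite card_imset ?card_ord //; apply: injective_ord_lt => i j ltij.
have /prod_take_split[B [sBW szB] PjE] : (i <= j <= size W)%N.
  by rewrite (ltnW ltij) ltnW.
have BN : \prod_(x <- B) x \notin N.
  apply: contraL (ltn_ord j) => BN; rewrite -leqNgt.
  apply: leq_trans (minW sBW (conj _ BN)) _; last by rewrite szB leq_subr.
  by rewrite -size_eq0 szB subn_eq0 -ltnNge.
set c := (\prod_(x <- B) x) ^ (P i)^-1.
have cG : c \in G.
  by rewrite groupJ ?groupV // group_prod_seq // => x /(mem_submset sBW)/sWG.
have nNG := subsetP (normal_norm nsNG).
have cN : c \notin N by rewrite memJ_norm // groupV nNG.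
have vN1 : v \in N^# by rewrite !inE W1.
apply: contra cN => /eqP vPij; apply: (subsetP (cent_N vN1)).
rewrite inE cG; apply/cent1P/commute_sym/commgP/conjg_fixP.
have -> : c = P i * \prod_(x <- B) x * (P i)^-1 by rewrite /c /conjg invgK mulgA.
by rewrite conjgM -PjE -vPij conjgK.
Qed.

Lemma subprods_kernel_step :
  (#|subprods S' :&: N| + size W <= #|subprods S :&: N|)%N.
Proof.
have nNG := subsetP (normal_norm nsNG).
have WS'S : perm_eq (W ++ S') S by rewrite perm_sym.
set R := [set v ^ P i | i : 'I_(size W)].
have RN : 1 |: R \subset N.
  rewrite subUset sub1set group1.
  by apply/subsetP => _ /imsetP[i _ ->]; rewrite memJ_norm ?nNG.
have R1 : 1 \notin R.
  by apply/imsetP => -[i _ /esym/eqP]; rewrite conjg_eq1 (negbTE W1).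
have prodS'R a b : a \in subprods S' -> b \in R ->
    exists2 U, submset U S & U != [::] /\ \prod_(x <- U) x = a * b.
  move=> /subprodsP[T sTS' <-] /imsetP[i _ ->]; exists (T ++ rot i W).
    apply: perm_submsetr (submset_cat sTS' (_ : submset (rot i W) W)).
      by rewrite perm_catC.
    by exists [::]; rewrite cats0 perm_sym perm_rot.
  have Wn0 : size W != 0 by rewrite size_eq0.
  by rewrite -size_eq0 size_cat size_rot addn_eq0 (negbTE Wn0) andbF big_cat prod_rot.
have sub : (subprods S' :&: N) * (1 |: R) \subset subprods S :&: N.
  apply/subsetP => _ /mulsgP[a b /setIP[aS' aN] bR ->].
  have Nab : a * b \in N by rewrite groupM // (subsetP RN).
  rewrite inE Nab andbT.
  case/setU1P: bR => [-> | bR].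
    by rewrite mulg1 (subsetP (subprodsS (perm_submsetr WS'S (submset_catr S' W)))).
  by have [U sUS [_ <-]] := prodS'R a b aS' bR; apply: mem_subprods.
have uq : unique_one_rep (subprods S' :&: N) (1 |: R).
  move=> a b /setIP[aS' _] /setU1P[// | bR] ab1.
  have [U sUS [nU prodU]] := prodS'R a b aS' bR.
  have freeU := product_one_free_submset sUS freeS.
  by case/eqP: (product_one_free_prod freeU nU); rewrite prodU.
have X'1 : 1 \in subprods S' :&: N by rewrite inE subprods1 group1.
have := scherk abN (subsetIr _ _) RN X'1 (setU11 1 R) uq.
rewrite cardsU1 R1 card_conj_prefix add1n addnS -addn1 leq_add2r => /leq_trans; apply.
exact: subset_leq_card sub.
Qed.

End MinimalBlock.

Theorem subprods_kernel_lower_bound S : product_one_free G S ->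
  (size S + 2 <= #|subprods S :&: N| + #|G : N|)%N.
Proof.
elim: {S}_.+1 {-2}S (ltnSn (size S)) => // n IHn S ltSn freeS.
have [exW | noW] :=
  pselect (exists2 W, submset W S & W != [::] /\ \prod_(x <- W) x \in N).
  have [W [S' defS] [[nW WN] minW]] := ex_submset_minsize exW.
  have sS'S : submset S' S by apply: perm_submsetr (submset_catr S' W); rewrite perm_sym.
  have szS : size S = (size W + size S')%N by rewrite (perm_size defS) size_cat.
  have ltS'n : (size S' < n)%N.
    have : size W != 0 by rewrite size_eq0.
    lia.
  have IH := IHn S' ltS'n (product_one_free_submset sS'S freeS).
  have step := subprods_kernel_step freeS defS nW WN minW.
  rewrite szS -addnA.
  apply: leq_trans (leq_add (leqnn (size W)) IH) _.
  by rewrite addnA [size W + _]addnC leq_add2r.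
have sSG : {subset S <= G} by case: freeS => /allP.
have /(size_lt_indexg sSG) :
    forall W, submset W S -> W != [::] -> \prod_(x <- W) x \notin N.
  by move=> W sWS nW; apply/negP => WN; apply: noW; exists W.
have : (0 < #|subprods S :&: N|)%N.
  by apply/card_gt0P; exists 1; rewrite inE subprods1 group1.
lia.
Qed.

End KernelSubproducts.

Section IntegerPower.
Local Open Scope group_scope.
Variables (gT : finGroupType) (y : gT) (m : nat).
Hypotheses (m_gt0 : (0 < m)%N) (ym : y ^+ m = 1).

Lemma expgz_expg r : exists2 R : nat, expgz y r = y ^+ R & (m%:Z %| (R%:Z - r)%R)%Z.
Proof.
case: r => n /=; first by exists n; rewrite ?GRing.subrr ?dvdz0.
have nmE : (n.+1 + n.+1 * m.-1 = n.+1 * m)%N by rewrite addnC -mulnSr prednK.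
exists (n.+1 * m.-1)%N.
  by apply/eqP; rewrite eq_invg_mul -expgD nmE mulnC expgM ym expg1n.
by rewrite NegzE GRing.opprK -PoszD addnC nmE dvdzE /= dvdn_mull.
Qed.

Lemma expgz_fix_trivial r b : coprimez (r - 1) m ->
  (expgz y r) ^+ b = y ^+ b -> y ^+ b = 1.
Proof.
move=> cop; have [R -> dR] := expgz_expg r.
rewrite -expgM => /eqP; rewrite eq_expg_mod_order => /eqP Rbb.
apply/eqP; rewrite -order_dvdn.
have oy : (#[y] %| m)%N by rewrite order_dvdn ym.
have : (#[y]%:Z %| ((R * b)%:Z - b%:Z)%R)%Z by rewrite -eqz_mod_dvd !modz_nat Rbb.
have -> : ((R * b)%:Z - b%:Z = (R%:Z - r) * b%:Z + (r - 1) * b%:Z)%R.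
  by rewrite PoszM; ring.
have dRb : (#[y]%:Z %| ((R%:Z - r) * b%:Z)%R)%Z.
  by apply/dvdz_mulr/(dvdz_trans _ dR); rewrite dvdzE.
rewrite (GRing.rpredDl _ dRb) Gauss_dvdzr ?dvdzE //.
by rewrite coprimez_sym (coprimez_dvdr oy cop).
Qed.

End IntegerPower.

Section Metacyclic.
Local Open Scope group_scope.
Variables (gT : finGroupType) (G : {group gT}) (x y : gT) (p m : nat) (r : int).
Hypotheses (pr_p : prime p) (m_gt0 : (0 < m)%N).
Hypotheses (defG : G :=: <<[set x; y]>>) (xp : x ^+ p = 1) (ym : y ^+ m = 1).
Hypotheses (conj_yx : x^-1 * y * x = expgz y r) (cardG : #|G| = (p * m)%N).
Hypothesis coprime_r1m : coprimez (r - 1) m.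

Let xG : x \in G. Proof. by rewrite defG mem_gen // !inE eqxx. Qed.
Let yG : y \in G. Proof. by rewrite defG mem_gen // !inE eqxx orbT. Qed.

Lemma norm_cycle_x : x \in 'N(<[y]>).
Proof.
apply/normP/eqP; rewrite eqEcard cardJg leqnn andbT -cycleJ cycle_subG.
rewrite /conjg mulgA conj_yx.
by case: (r) => n /=; rewrite ?groupV groupX // cycle_id.
Qed.

Lemma normal_cycle_y : <[y]> <| G.
Proof.
rewrite /normal cycle_subG yG defG gen_subG.
apply/subsetP => z /set2P[] ->; first exact: norm_cycle_x.
exact: subsetP (normG _) y (cycle_id y).
Qed.

Lemma order_y : #[y] = m.
Proof.
have sGyx : G \subset <[y]> * <[x]>.
  rewrite -norm_joinEr ?cycle_subG ?norm_cycle_x // defG gen_subG.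
  by apply/subsetP => z /set2P[] ->; rewrite mem_gen // inE cycle_id ?orbT.
have ox : (#[x] <= p)%N by rewrite dvdn_leq ?prime_gt0 // order_dvdn xp.
have oy : (#[y] <= m)%N by rewrite dvdn_leq // order_dvdn ym.
have : (p * m <= #[y] * p)%N.
  rewrite -cardG (leq_trans (subset_leq_card sGyx)) //.
  rewrite (leq_trans _ (leq_mul (leqnn _) ox)) //.
  by rewrite mul_cardG leq_pmulr ?cardG_gt0.
by rewrite mulnC leq_pmul2r ?prime_gt0 // => le_my; apply/eqP; rewrite eqn_leq oy.
Qed.

Lemma index_cycle_y : #|G : <[y]>| = p.
Proof.
have := Lagrange (normal_sub normal_cycle_y).
by rewrite -/#[y] order_y cardG mulnC => /eqP; rewrite eqn_pmul2r // => /eqP.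
Qed.

Lemma x_notin_cycle_y : x \notin <[y]>.
Proof.
apply: contraTN (prime_gt1 pr_p) => xy; rewrite -index_cycle_y -leqNgt.
have : G \subset <[y]>.
  by rewrite defG gen_subG; apply/subsetP => z /set2P[] ->; rewrite ?cycle_id.
by rewrite -indexg_eq1 => /eqP->.
Qed.

Lemma order_x : #[x] = p.
Proof.
have : (#[x] %| p)%N by rewrite order_dvdn xp.
case/primeP: pr_p => _ /[apply] /orP[| /eqP //].
by rewrite order_eq1 => /eqP x1; move: x_notin_cycle_y; rewrite x1 group1.
Qed.

Lemma cent1_x_cycle_y v : v \in <[y]> -> x \in 'C[v] -> v = 1.
Proof.
case/cycleP=> b ->; move/cent1P/commute_sym/commgP/conjg_fixP.
rewrite conjXg /conjg mulgA conj_yx; exact: expgz_fix_trivial m_gt0 ym _ _ coprime_r1m.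
Qed.

Lemma cent_cycle_y_sub : {in <[y]>^#, forall v, 'C_G[v] \subset <[y]>}.
Proof.
move=> v /setD1P[v1 vy].
have maxN : maximal_eq <[y]> G.
  rewrite /maximal_eq p_index_maximal ?orbT ?index_cycle_y //.
  exact: normal_sub normal_cycle_y.
have sNC : <[y]> \subset 'C_G[v].
  by rewrite subsetI normal_sub ?normal_cycle_y //= sub_cent1 (subsetP (cycle_abelian y)).
case/maximal_eqP: maxN => _ /(_ _ sNC (subsetIl _ _)) [-> // | CG].
have : x \in 'C_G[v] by rewrite CG.
by case/setIP=> _ /(cent1_x_cycle_y vy) v_eq1; rewrite v_eq1 eqxx in v1.
Qed.

Lemma product_one_free_witness : product_one_free G (nseq m.-1 y ++ nseq p.-1 x).
Proof.
set S := nseq m.-1 y ++ nseq p.-1 x.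
have yx : (y == x) = false.
  by apply: contraNF x_notin_cycle_y => /eqP <-; apply: cycle_id.
split; first by rewrite all_cat !all_nseq xG yG !orbT.
move=> T sTS nT [s [psT prod1]].
have memS g : g \in s -> g = y \/ g = x.
  rewrite (perm_mem psT) => /(mem_subseq sTS).
  by rewrite mem_cat !mem_nseq => /orP[]/andP[_ /eqP->]; [left | right].
have countS g : (count_mem g s <= count_mem g S)%N.
  by rewrite (seq.permP psT) leq_count_subseq.
have cx0 : count_mem x s = 0%N.
  apply/eqP; apply: contraNT x_notin_cycle_y; rewrite -lt0n => cx_gt0.
  have : x ^- count_mem x s * \prod_(g <- s) g \in <[y]>.
    apply: prod_count_coset norm_cycle_x _ => g /memS[] ->;
    by rewrite !inE ?cycle_id ?eqxx ?orbT.
  rewrite prod1 mulg1 groupV; set c := count_mem x s => xcy.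
  have ltcp : (c < p)%N.
    apply: leq_ltn_trans (countS x) _.
    by rewrite count_cat !count_nseq /= yx eqxx mul0n mul1n add0n ltn_predL prime_gt0.
  have cop : coprime #|<[x]>| c by rewrite -/#[x] order_x prime_coprime // gtnNdvd.
  by rewrite -(expgK cop (cycle_id x)) groupX.
have sy : s = nseq (size s) y.
  apply/all_pred1P/allP => g gs; case: (memS g gs) => [-> | gx]; first exact: eqxx.
  by move/count_memPn: cx0; rewrite -gx gs.
have le_sm : (size s <= m.-1)%N.
  have := countS y; rewrite {1}sy count_nseq /= eqxx mul1n count_cat !count_nseq /=.
  by rewrite eqxx eq_sym yx mul1n mul0n addn0.
have s_gt0 : (0 < size s)%N by rewrite (perm_size psT) lt0n size_eq0; apply/eqP.
move: prod1; rewrite sy big_nseq iter_mulg_1 => /eqP; rewrite -order_dvdn order_y.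
move/(dvdn_leq s_gt0); lia.
Qed.

Lemma product_one_free_size S : product_one_free G S -> (size S <= m + p - 2)%N.
Proof.
move/(subprods_kernel_lower_bound normal_cycle_y (cycle_abelian y) cent_cycle_y_sub).
move/leq_trans/(_ (leq_add (subset_leq_card (subsetIr _ _)) (leqnn _))).
rewrite -/#[y] order_y index_cycle_y; lia.
Qed.

End Metacyclic.

Theorem proposition3p5 (gT : finGroupType) (G : {group gT}) (x y : gT)
    (p m : nat) (r : int) :
  prime p -> (1 <= m)%N ->
  (r ^+ p == 1 %[mod m%:Z])%Z ->
  G :=: <<[set x; y]>>%g ->
  (x ^+ p = 1)%g -> (y ^+ m = 1)%g -> (x^-1 * y * x = expgz y r)%g ->
  #|G| = (p * m)%N ->
  (forall q : nat, prime q -> q %| #|G| -> p <= q)%N ->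
  gcdz (p%:Z * (r - 1))%R m%:Z = 1%Z ->
  is_small_davenport G (m + p - 2).
Proof.
move=> pr_p m_gt0 _ defG xp ym conj_yx cardG _ gcd1.
have /andP[_ cop] : coprimez p m && coprimez (r - 1) m by rewrite -coprimezMl; apply/eqP.
split.
  exists (nseq m.-1 y ++ nseq p.-1 x); split.
    exact: product_one_free_witness pr_p m_gt0 defG xp ym conj_yx cardG cop.
  by rewrite size_cat !size_nseq; have := prime_gt1 pr_p; lia.
move=> S; exact: product_one_free_size pr_p m_gt0 defG xp ym conj_yx cardG cop S.
Qed.
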